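(* Let $n\ge1$, let $a_1,\dots,a_n\in\mathbb{C}$ be distinct, let $m_1,\dots,m_n\ge1$ be integers, let $c_0,b_k^{(j)}\in\mathbb{C}$, and let $$r(\lambda)=\lambda-c_0-\sum_{j=1}^n\sum_{k=1}^{m_j}\frac{b_k^{(j)}}{(\lambda-a_j)^k}.$$ If $\lambda_0$ is a zero of $r$, then $$|\lambda_0|\le\max_{1\le j\le n}\Big\{|a_j|+\cos\Big(\frac{\pi}{m_j+1}\Big),\ |c_0|\Big\}+\frac12\left(\sqrt{\sum_{j=1}^n m_j}+\sqrt{\sum_{j=1}^n\sum_{k=1}^{m_j}|b_k^{(j)}|^2}\right).$$
   Context: A zero of $r$ is a $\lambda_0\in\mathbb{C}\setminus\{a_1,\dots,a_n\}$ with $r(\lambda_0)=0$. *)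

From HB Require Import structures.
From mathcomp Require Import all_boot all_order all_algebra.
From mathcomp Require Import all_classical all_reals all_analysis.
From mathcomp Require Import complex.
Set Implicit Arguments. Unset Strict Implicit. Unset Printing Implicit Defensive.
Import Order.TTheory GRing.Theory Num.Theory.
Local Open Scope ring_scope.

Definition rfun (R : realType) (n : nat) (a : 'I_n -> R[i]) (m : 'I_n -> nat)
  (c0 : R[i]) (b : 'I_n -> nat -> R[i]) (lam : R[i]) : R[i] :=
  lam - c0 - \sum_(j < n) \sum_(1 <= k < (m j).+1) b j k / (lam - a j) ^+ k.

Definition is_zero_of_r (R : realType) (n : nat) (a : 'I_n -> R[i]) (m : 'I_n -> nat)
  (c0 : R[i]) (b : 'I_n -> nat -> R[i]) (lam : R[i]) : Prop :=
  (forall j, lam != a j) /\ rfun a m c0 b lam = 0.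

Notation normc := ComplexField.Normc.normc.

From HB Require Import structures.
From mathcomp Require Import all_boot all_order all_algebra.
From mathcomp Require Import all_classical all_reals all_analysis.
From mathcomp Require Import complex.
From mathcomp Require Import ring lra.
Import Order.TTheory GRing.Theory Num.Theory.
Local Open Scope ring_scope.

(* Put w_j = (lam0 - a_j)^-1 and weigh the equation r(lam0) = 0 together with
   the identities lam0 w_j^k = a_j w_j^k + w_j^(k-1) against the vector
   (1, (conj w_j)^k): with Y = sum_j sum_k |w_j|^(2k) this gives
   lam0 (1 + Y) = c0 + sum b_k^(j) w_j^k + sum_j (a_j Y_j + sum_k conj(w_j)^k w_j^(k-1)),
   a Rayleigh quotient of a linearization of r.  After the triangle inequality,
   the Jordan-block part sum_(k>=2) |w_j|^(2k-1) is at most cos(pi/(m_j+1)) Y_j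
   (the largest eigenvalue of a path of m_j vertices is 2 cos(pi/(m_j+1))), and
   the remaining terms are bounded by Cauchy-Schwarz and sqrt Y <= (1 + Y)/2. *)

Section RealInequalities.
Context {R : realFieldType}.

Lemma mul_le_sqr_add (c x y : R) : 0 < c -> x * y <= c * x ^+ 2 + y ^+ 2 / (4 * c).
Proof.
move=> c_gt0; have c4_gt0 : 0 < 4 * c by rewrite mulr_gt0.
rewrite -(ler_pM2l c4_gt0).
have -> : 4 * c * (c * x ^+ 2 + y ^+ 2 / (4 * c)) = (2 * c * x) ^+ 2 + y ^+ 2.
  by field; rewrite gt_eqF.
have : 0 <= (2 * c * x - y) ^+ 2 by exact: sqr_ge0.
nra.
Qed.

Lemma sum_mul_pred_le (g : R) (c x : nat -> R) (p : nat) : (1 <= p)%N ->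
  c 1%N = 0 ->
  (forall k, (2 <= k)%N -> (k <= p)%N -> 0 < c k /\ 4 * c k * (g - c k.-1) = 1) ->
  \sum_(2 <= k < p.+1) x k * x k.-1 <=
    g * \sum_(1 <= k < p) x k ^+ 2 + c p * x p ^+ 2.
Proof.
elim: p => [//|[_ _ c1 _|p IHp _ c1 hc]].
  by rewrite !big_geq // c1 mul0r mulr0 addr0.
have [cp_gt0 cp_eq] := hc p.+2 isT (leqnn _).
have IH := IHp isT c1 (fun k k2 kp => hc k k2 (leqW kp)).
rewrite big_nat_recr //= [X in g * X]big_nat_recr //=.
have amgm := mul_le_sqr_add _ (x p.+2) (x p.+1) cp_gt0.
have coef : x p.+1 ^+ 2 / (4 * c p.+2) = (g - c p.+1) * x p.+1 ^+ 2.
  have c4_neq0 : 4 * c p.+2 != 0 by rewrite mulf_neq0 ?gt_eqF.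
  suff -> : g - c p.+1 = (4 * c p.+2)^-1 by rewrite mulrC.
  by apply: (mulfI c4_neq0); rewrite cp_eq mulfV.
rewrite coef in amgm.
lra.
Qed.
End RealInequalities.

Section PathQuadraticForm.
Context {R : realType}.

Lemma sinB_add_sinD (x y : R) : sin (x - y) + sin (x + y) = 2 * sin x * cos y.
Proof. by rewrite sinB sinD; ring. Qed.

Lemma sum_mul_pred_le_cos (m : nat) (x : nat -> R) : (1 <= m)%N ->
  \sum_(2 <= k < m.+1) x k * x k.-1 <=
    cos (pi / m.+1%:R) * \sum_(1 <= k < m.+1) x k ^+ 2.
Proof.
move=> m_gt0; set th := pi / m.+1%:R.
pose s k := sin (k%:R * th).
have s_rec k : s k + s k.+2 = 2 * cos th * s k.+1.
  rewrite /s; have -> : k%:R * th = k.+1%:R * th - th by rewrite -addn1 natrD; ring.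
  have -> : k.+2%:R * th = k.+1%:R * th + th by rewrite -[k.+2]addn1 natrD; ring.
  by rewrite sinB_add_sinD; ring.
have s_gt0 k : (0 < k)%N -> (k <= m)%N -> 0 < s k.
  move=> k_gt0 km; apply: sin_gt0_pi; apply/andP; split.
    by rewrite mulr_gt0 ?divr_gt0 ?pi_gt0 ?ltr0n.
  by rewrite /th mulrA ltr_pdivrMr ?ltr0n // mulrC ltr_pM2l ?pi_gt0 // ltr_nat ltnS.
have s_end : s m.+1 = 0 by rewrite /s /th mulrC mulfVK ?sinpi ?pnatr_eq0.
(* [s] is the Perron vector of the path on [m] vertices; its recurrence
   [s_rec] is what makes the weights [c] satisfy [sum_mul_pred_le]. *)
pose c k := s k.-1 / (2 * s k).
have c_end : c m = cos th.
  have := s_rec m.-1; rewrite !prednK // s_end addr0 /c => ->.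
  by field; rewrite gt_eqF ?s_gt0.
rewrite [X in _ * X]big_nat_recr //= mulrDr -[X in _ + X * _]c_end.
apply: sum_mul_pred_le => // [|k k2 km].
  by rewrite /c /s mul0r sin0 mul0r.
case: k k2 km => [|[|k]] // _ km.
have sk1 := s_gt0 k.+1 isT (ltnW km); have sk2 := s_gt0 k.+2 isT km.
split; first by rewrite divr_gt0 ?mulr_gt0.
have -> : cos th = (s k + s k.+2) / (2 * s k.+1).
  by rewrite s_rec; field; rewrite gt_eqF.
by rewrite /c /=; field; rewrite !gt_eqF.
Qed.
End PathQuadraticForm.

Section CauchySchwarz.
Context {R : rcfType}.

Lemma sum_mul_le_sqrt_half {I J : eqType} (r : seq I) (s : I -> seq J)
    (f g : I -> J -> R) :
  \sum_(i <- r) \sum_(j <- s i) f i j * g i j <=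
    Num.sqrt (\sum_(i <- r) \sum_(j <- s i) f i j ^+ 2)
    * (1 + \sum_(i <- r) \sum_(j <- s i) g i j ^+ 2) / 2.
Proof.
set F := \sum_(i <- r) \sum_(j <- s i) f i j ^+ 2.
set G := \sum_(i <- r) \sum_(j <- s i) g i j ^+ 2.
have G_ge0 : 0 <= G by do 2!(apply: sumr_ge0 => ? _); exact: sqr_ge0.
have [F0|F_neq0] := eqVneq F 0.
  rewrite F0 sqrtr0 !mul0r big1_seq // => i /= ir.
  rewrite big1_seq // => j /= js.
  move/eqP: F0; rewrite psumr_eq0 => [/allP/(_ i ir)/=|i' _]; last first.
    by apply: sumr_ge0 => ? _; exact: sqr_ge0.
  rewrite psumr_eq0 => [/allP/(_ j js)/=|? _]; last exact: sqr_ge0.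
  by rewrite sqrf_eq0 => /eqP ->; rewrite mul0r.
have F_gt0 : 0 < F by rewrite lt_def F_neq0; do 2!(apply: sumr_ge0 => ? _); exact: sqr_ge0.
set t := Num.sqrt F; have t_gt0 : 0 < t by rewrite sqrtr_gt0.
(* termwise AM-GM with weight [t / 2], where [t ^+ 2 = F] *)
apply: (@le_trans _ _ (t / 2 * G + F / (4 * (t / 2)))).
  rewrite mulr_sumr mulr_suml -big_split /=; apply: ler_sum => i _.
  rewrite mulr_sumr mulr_suml -big_split /=; apply: ler_sum => j _.
  by rewrite mulrC mul_le_sqr_add ?divr_gt0.
suff -> : t / 2 * G + F / (4 * (t / 2)) = t * (1 + G) / 2 by [].
by rewrite -(sqr_sqrtr (ltW F_gt0)) -/t; field; rewrite gt_eqF.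
Qed.

Lemma sum_le_sqrt_size_half {I J : eqType} (r : seq I) (s : I -> seq J)
    (g : I -> J -> R) :
  \sum_(i <- r) \sum_(j <- s i) g i j <=
    Num.sqrt (\sum_(i <- r) (size (s i))%:R)
    * (1 + \sum_(i <- r) \sum_(j <- s i) g i j ^+ 2) / 2.
Proof.
have one_sum (t : seq J) : \sum_(j <- t) (1 : R) ^+ 2 = (size t)%:R.
  by rewrite expr1n -sum1_size natr_sum.
have := sum_mul_le_sqrt_half r s (fun _ _ => 1) g.
under [X in X <= _]eq_bigr => i _ do under eq_bigr => j _ do rewrite mul1r.
by under [X in Num.sqrt X]eq_bigr => i _ do rewrite one_sum.
Qed.
End CauchySchwarz.

Section ComplexModulus.
Context {R : rcfType}.
Local Open Scope complex_scope.

Lemma normc_ge0 (x : R[i]) : 0 <= normc x.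
Proof. exact: (@normr_ge0 R (Rcomplex R)). Qed.

Lemma ler_normcD (x y : R[i]) : normc (x + y) <= normc x + normc y.
Proof. exact: le_normcD. Qed.

Lemma ler_normc_sum {I : Type} (r : seq I) (F : I -> R[i]) :
  normc (\sum_(i <- r) F i) <= \sum_(i <- r) normc (F i).
Proof. exact: (@ler_norm_sum R (Rcomplex R)). Qed.

Lemma normcX (x : R[i]) k : normc (x ^+ k) = normc x ^+ k.
Proof.
elim: k => [|k IHk]; first by rewrite !expr0 ComplexField.Normc.normc1.
by rewrite !exprS ComplexField.Normc.normcM IHk.
Qed.

Lemma normc_conj (x : R[i]) : normc x^* = normc x.
Proof. by apply: complexI; exact: normcJ. Qed.

Lemma ger0_normc (x : R) : 0 <= x -> normc x%:C = x.
Proof. by move=> x_ge0; rewrite /= expr0n /= addr0 sqrtr_sqr ger0_norm. Qed.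

End ComplexModulus.

Section ZeroOfR.
Variables (R : realType) (n : nat) (a : 'I_n -> R[i]) (m : 'I_n -> nat).
Variables (c0 : R[i]) (b : 'I_n -> nat -> R[i]) (lam : R[i]).
Hypothesis m_gt0 : forall j, (1 <= m j)%N.
Hypothesis lam_neq_a : forall j, lam != a j.
Hypothesis r_lam : rfun a m c0 b lam = 0.
Local Open Scope complex_scope.

Let w j := (lam - a j)^-1.
Let rho j := normc (w j).
Let Y j := \sum_(1 <= k < (m j).+1) (rho j ^+ k) ^+ 2.

Lemma lam_eq_sum : lam = c0 + \sum_(j < n) \sum_(1 <= k < (m j).+1) b j k * w j ^+ k.
Proof.
move: r_lam; rewrite /rfun => /eqP; rewrite subr_eq0 subr_eq => /eqP ->.
rewrite addrC; congr (_ + _); apply: eq_bigr => j _; apply: eq_bigr => k _.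
by rewrite /w exprVn.
Qed.

Lemma sum_conj_mul_eq j :
  \sum_(1 <= k < (m j).+1) (w j)^* ^+ k * w j ^+ k = (Y j)%:C.
Proof.
rewrite /Y rmorph_sum; apply: eq_bigr => k _.
by rewrite -exprMn mulrC -sqr_normc -exprM mulnC exprM !rmorphXn.
Qed.

Lemma lam_mul_weight j : lam * (Y j)%:C =
  a j * (Y j)%:C + \sum_(1 <= k < (m j).+1) (w j)^* ^+ k * w j ^+ k.-1.
Proof.
have shift : \sum_(1 <= k < (m j).+1) (w j)^* ^+ k * w j ^+ k
    = w j * \sum_(1 <= k < (m j).+1) (w j)^* ^+ k * w j ^+ k.-1.
  rewrite mulr_sumr; apply: eq_big_nat => -[//|k] _.
  by rewrite [w j ^+ k.+1]exprS mulrCA.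
have lam_sub_a : lam - a j != 0 by rewrite subr_eq0.
rewrite -sum_conj_mul_eq -{1}(subrK (a j) lam) mulrDl addrC; congr (_ + _).
by rewrite shift mulrA mulfV // mul1r.
Qed.

Lemma normc_lam_mul_le :
  normc lam * (1 + \sum_(j < n) Y j) <= normc c0
    + \sum_(j < n) \sum_(1 <= k < (m j).+1) normc (b j k) * rho j ^+ k
    + \sum_(j < n) (normc (a j) * Y j
                    + \sum_(1 <= k < (m j).+1) rho j ^+ k * rho j ^+ k.-1).
Proof.
have Y_ge0 j : 0 <= Y j by apply: sumr_ge0 => k _; exact: sqr_ge0.
have lam_mul : lam * (1 + \sum_(j < n) Y j)%:C =
    (c0 + \sum_(j < n) \sum_(1 <= k < (m j).+1) b j k * w j ^+ k)
    + \sum_(j < n) (a j * (Y j)%:C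
                    + \sum_(1 <= k < (m j).+1) (w j)^* ^+ k * w j ^+ k.-1).
  rewrite rmorphD rmorph1 rmorph_sum mulrDr mulr1 mulr_sumr -lam_eq_sum.
  by congr (_ + _); apply: eq_bigr => j _; exact: lam_mul_weight.
have S_ge0 : 0 <= 1 + \sum_(j < n) Y j by rewrite addr_ge0 ?sumr_ge0.
rewrite -(ger0_normc _ S_ge0) -ComplexField.Normc.normcM lam_mul.
apply: le_trans (ler_normcD _ _) _; apply: lerD.
  apply: le_trans (ler_normcD _ _) _; apply: lerD => //.
  apply: le_trans (ler_normc_sum _ _) _; apply: ler_sum => j _.
  apply: le_trans (ler_normc_sum _ _) _; apply: ler_sum => k _.
  by rewrite ComplexField.Normc.normcM normcX.
apply: le_trans (ler_normc_sum _ _) _; apply: ler_sum => j _.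
apply: le_trans (ler_normcD _ _) _; apply: lerD.
  by rewrite ComplexField.Normc.normcM ger0_normc.
apply: le_trans (ler_normc_sum _ _) _; apply: ler_sum => k _.
by rewrite ComplexField.Normc.normcM !normcX normc_conj.
Qed.

Lemma sum_pow_mul_pred_le j :
  \sum_(1 <= k < (m j).+1) rho j ^+ k * rho j ^+ k.-1 <=
    cos (pi / (m j).+1%:R) * Y j + \sum_(1 <= k < (m j).+1) rho j ^+ k.
Proof.
have rho_ge0 : 0 <= rho j by exact: normc_ge0.
have pow_ge0 k : 0 <= rho j ^+ k by exact: exprn_ge0.
rewrite big_ltn ?ltnS // expr1 expr0 mulr1 addrC.
rewrite [X in _ <= _ + X]big_ltn ?ltnS // expr1 lerD //.
  exact: (sum_mul_pred_le_cos (m j) (fun k => rho j ^+ k) (m_gt0 j)).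
by rewrite lerDl sumr_ge0.
Qed.

Lemma normc_zero_le :
  normc lam <=
    \big[Num.max/normc c0]_(j < n) (normc (a j) + cos (pi / (m j).+1%:R))
    + 2^-1 * (Num.sqrt (\sum_(j < n) (m j)%:R)
              + Num.sqrt (\sum_(j < n) \sum_(1 <= k < (m j).+1) normc (b j k) ^+ 2)).
Proof.
set M := \big[Num.max/_]_(j < n) _.
set sN := Num.sqrt _; set sB := Num.sqrt _.
set Yt := \sum_(j < n) Y j.
have Yt_ge0 : 0 <= Yt by do 2!(apply: sumr_ge0 => ? _); exact: sqr_ge0.
have c0_le_M : normc c0 <= M by exact: bigmax_ge_id.
have poles_le : \sum_(j < n) (normc (a j) * Y j
      + \sum_(1 <= k < (m j).+1) rho j ^+ k * rho j ^+ k.-1)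
    <= M * Yt + \sum_(j < n) \sum_(1 <= k < (m j).+1) rho j ^+ k.
  rewrite /Yt mulr_sumr -big_split /=; apply: ler_sum => j _.
  have Y_ge0 : 0 <= Y j by apply: sumr_ge0 => k _; exact: sqr_ge0.
  have aj_le_M : (normc (a j) + cos (pi / (m j).+1%:R)) * Y j <= M * Y j.
    by rewrite ler_wpM2r // /M; exact: le_bigmax.
  have := sum_pow_mul_pred_le j; rewrite mulrDl in aj_le_M; lra.
have b_le : \sum_(j < n) \sum_(1 <= k < (m j).+1) normc (b j k) * rho j ^+ k
    <= sB * (1 + Yt) / 2 by exact: sum_mul_le_sqrt_half.
have one_le : \sum_(j < n) \sum_(1 <= k < (m j).+1) rho j ^+ k
    <= sN * (1 + Yt) / 2.
  have := sum_le_sqrt_size_half (index_enum 'I_n) (fun j => index_iota 1 (m j).+1)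
    (fun j k => rho j ^+ k).
  by under [X in Num.sqrt X]eq_bigr => j _ do
    rewrite /index_iota size_iota subSS subn0.
rewrite -(ler_pM2r (_ : 0 < 1 + Yt)) ?ltr_wpDr //.
have := normc_lam_mul_le; rewrite -/Yt; nra.
Qed.

End ZeroOfR.

Theorem theorem3p10 (R : realType) (n : nat) (a : 'I_n -> R[i]) (m : 'I_n -> nat)
  (c0 : R[i]) (b : 'I_n -> nat -> R[i]) (lam0 : R[i]) :
  (0 < n)%N ->
  injective a ->
  (forall j, (1 <= m j)%N) ->
  is_zero_of_r a m c0 b lam0 ->
  normc lam0 <=
    \big[Num.max/normc c0]_(j < n) (normc (a j) + cos (pi / (m j).+1%:R))
    + 2^-1 * (Num.sqrt (\sum_(j < n) (m j)%:R)
              + Num.sqrt (\sum_(j < n) \sum_(1 <= k < (m j).+1) normc (b j k) ^+ 2)).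
Proof.
move=> _ _ m_gt0 [lam0_neq_a r_lam0].
exact: normc_zero_le.
Qed.
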